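(* In the model described in the context, there exist parameters $\rho,q$ with $1>\rho>q>0$, a distribution $(\pi^{(0,0)},\pi^{(0,1)},\pi^{(1,0)},\pi^{(1,1)})$ of $(\tilde y_0^+,\tilde y_0^-)$ with $\pi^{(1,0)}<1$, and two label-flip probabilities $\nu_1\neq\nu_2$ in $[0,\tfrac12)$ such that, for each $j\in\{1,2\}$ (with $\nu=\nu_j$), there exists $m\ge2$ with $\Pr(W_2)<\Pr(W_1)$, and the smallest $m_0(\nu_j)$ such that $\Pr(W_2)>\Pr(W_1)$ for all $m\ge m_0(\nu_j)$ satisfies $m_0(\nu_1)\neq m_0(\nu_2)$. (For instance $\rho=0.15$, $q=0.01$, $\pi^{(1,0)}=0.55^2$, $\pi^{(0,1)}=0.45^2$, $\pi^{(0,0)}=\pi^{(1,1)}=0.55\cdot0.45$, $\nu\in\{0.05,0.2\}$.)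
   Context: Model. Fix an integer $m\ge 2$, and reals $1>\rho>q>0$, $0\le\nu<\tfrac12$. A sample consists of ground-truth labels $y_0,y_1,\dots,y_m\in\{0,1\}$ and noisy labels $\tilde y_0,\dots,\tilde y_m\in\{0,1\}$. Given $y_0$, the labels $y_1,\dots,y_m$ are conditionally independent with $\Pr(y_i=1\mid y_0=1)=\rho$ and $\Pr(y_i=1\mid y_0=0)=q$ for $i\in\{1,\dots,m\}$. For $i\in\{1,\dots,m\}$, $\tilde y_i = 1-y_i$ with probability $\nu$ and $\tilde y_i=y_i$ otherwise, the flips being independent of each other and of everything else. We draw one positive sample (superscript $+$, with $y_0^+=1$) and one negative sample (superscript $-$, with $y_0^-=0$) independently. The pair $(\tilde y_0^+,\tilde y_0^-)\in\{0,1\}^2$ has an arbitrary distribution, independent of all $y_i^\pm,\tilde y_i^\pm$ with $i\ge1$; write $\pi^{(u,v)}:=\Pr(\tilde y_0^+=u,\tilde y_0^-=v)$. Fix $\delta>0$. For each sample set $\bar s_{0,i} := \max(\tilde y_0,\tilde y_i)+\delta\min(\tilde y_0,\tilde y_i)$ for $i=1,\dots,m$, and let $\bar r_1\ge \bar r_2$ be the largest and second largest elements of $\{\bar s_{0,1},\dots,\bar s_{0,m}\}$ (as a multiset). For $k\in\{1,2\}$, $\Pr(W_k) := \Pr(\bar r_k^+>\bar r_k^-) + \tfrac12\Pr(\bar r_k^+=\bar r_k^-)$. *)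

From HB Require Import structures.
From mathcomp Require Import all_boot all_order all_algebra.
Set Implicit Arguments. Unset Strict Implicit. Unset Printing Implicit Defensive.
Import Order.TTheory GRing.Theory Num.Theory.
Local Open Scope ring_scope.

Section Model.
Variable R : realFieldType.

Definition bprob (p : R) (b : bool) : R := if b then p else 1 - p.

(* Probability weight of one sample with ground-truth y_0 = y0, ground truths
   y_i = y i and flip indicators f i (i = 1..m, indexed by 'I_m):
   y_i ~ Bernoulli(rho) if y0 else Bernoulli(q), f_i ~ Bernoulli(nu),
   all independent. The noisy label is  ytilde_i = y i (+) f i. *)
Definition sample_weight (m : nat) (rho q nu : R) (y0 : bool)
    (y f : {ffun 'I_m -> bool}) : R :=
  \prod_(i < m) (bprob (if y0 then rho else q) (y i) * bprob nu (f i)).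

Definition sbar (delta : R) (a b : bool) : R :=
  Num.max (a%:R : R) (b%:R) + delta * Num.min (a%:R : R) (b%:R).

Definition kth_largest (k : nat) (s : seq R) : R :=
  nth 0 (sort (fun x y : R => y <= x) s) k.-1.

(* rbar_k of a sample with noisy ytilde_0 = u *)
Definition rbar (delta : R) (k m : nat) (u : bool) (y f : {ffun 'I_m -> bool}) : R :=
  kth_largest k [seq sbar delta u (y i (+) f i) | i <- enum 'I_m].

Definition win (x y : R) : R :=
  (if y < x then 1 else 0) + (if x == y then 2^-1 else 0).

(* pi^{(u,v)} = Pr(ytilde_0^+ = u, ytilde_0^- = v) *)
Definition pi4 (p00 p01 p10 p11 : R) (u v : bool) : R :=
  if u then (if v then p11 else p10) else (if v then p01 else p00).

(* Pr(W_k) = Pr(rbar_k^+ > rbar_k^-) + 1/2 Pr(rbar_k^+ = rbar_k^-) *)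
Definition PrW (m : nat) (rho q nu p00 p01 p10 p11 delta : R) (k : nat) : R :=
  \sum_(u : bool) \sum_(v : bool) pi4 p00 p01 p10 p11 u v *
   \sum_(yp : {ffun 'I_m -> bool}) \sum_(fp : {ffun 'I_m -> bool})
   \sum_(yn : {ffun 'I_m -> bool}) \sum_(fn : {ffun 'I_m -> bool})
     sample_weight rho q nu true yp fp * sample_weight rho q nu false yn fn *
     win (rbar delta k u yp fp) (rbar delta k v yn fn).

End Model.

Definition is_min_threshold (P : nat -> Prop) (m0 : nat) : Prop :=
  (forall m, (2 <= m)%N -> (m0 <= m)%N -> P m) /\
  (forall m1, (forall m, (2 <= m)%N -> (m1 <= m)%N -> P m) -> (m0 <= m1)%N).

From HB Require Import structures.
From mathcomp Require Import all_boot all_order all_algebra.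
From mathcomp Require Import zify ring lra.
Import Order.TTheory GRing.Theory Num.Theory.
Local Open Scope ring_scope.

(* Take pi^(0,0) = 1: both noisy anchor labels are 0, so sbar_{0,i} is the noisy
   label ytilde_i whatever delta is, and rbar_k is the indicator that at least k of
   the m noisy labels are 1.  The win score of two indicators is affine in them,
   hence Pr(W_2) - Pr(W_1) = (P(a_q) - P(a_rho)) / 2, where P(a) = m a (1-a)^(m-1)
   is the probability of exactly one noisy positive and a_p = p(1-nu) + (1-p)nu.
   For rho = 1/2 and q = 1/8 this has the sign of 7^(m-1) - 4^m when nu = 0 and
   of 5 * 11^(m-1) - 8^m when nu = 1/4, which turn positive from m = 4 and m = 3. *)

Section Indicators.
Variable R : realFieldType.

Local Notation geR := (fun x y : R => y <= x).

Lemma sorted_ones_zeros (N M : nat) : sorted geR (nseq N 1 ++ nseq M 0).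
Proof.
have sorted_const (c : R) K : sorted geR (nseq K c).
  by elim: K => [|[|K] IH] //=; rewrite lexx.
case: N => [|N]; first exact: sorted_const.
elim: N => [|N IH] /=; last by rewrite lexx.
case: M => //= M; rewrite ler01; exact: (sorted_const 0 M.+1).
Qed.

Lemma perm_bool_count (bs : seq bool) :
  perm_eq bs (nseq (count id bs) true ++ nseq (size bs - count id bs) false).
Proof.
apply/permP => p; rewrite count_cat !count_nseq.
elim: bs => [|b s IH] /=; first by rewrite subnn !muln0.
have := count_size id s; rewrite IH; case: b; case: (p true); case: (p false) => /=; lia.
Qed.

Lemma sort_indicators (bs : seq bool) :
  sort geR [seq b%:R | b : bool <- bs] =
  nseq (count id bs) 1 ++ nseq (size bs - count id bs) 0.
Proof.
apply: (@sorted_eq _ geR).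
- by move=> x y z hyx hzy; exact: le_trans hzy hyx.
- by move=> x y /andP[hxy hyx]; apply/eqP; rewrite eq_le hxy hyx.
- by apply: sort_sorted => x y; exact: le_total.
- exact: sorted_ones_zeros.
- rewrite perm_sort; apply: perm_trans (perm_map _ (perm_bool_count bs)) _.
  by rewrite map_cat !map_nseq.
Qed.

Lemma kth_largest_indicators k (bs : seq bool) : (0 < k)%N ->
  kth_largest k [seq b%:R | b : bool <- bs] = (k <= count id bs)%N%:R :> R.
Proof.
case: k => // k _; rewrite /kth_largest sort_indicators nth_cat size_nseq /=.
by case: ifP => hk; rewrite nth_nseq ?hk //; case: ifP.
Qed.

Lemma win_indicators (b1 b2 : bool) :
  win b1%:R b2%:R = (1 + b1%:R - b2%:R) / 2 :> R.
Proof.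
by rewrite /win; case: b1; case: b2;
  rewrite /= ?ltxx ?eqxx ?ltr01 ?ltr10 ?oner_eq0 ?(eq_sym 0) ?oner_eq0 /=; field.
Qed.

Lemma prodr_indicator (I : finType) (b : I -> bool) :
  \prod_i (b i)%:R = [forall i, b i]%:R :> R.
Proof.
have [/forallP b_all|/forallPn [i /negbTE bi]] := boolP [forall i, b i].
  by rewrite big1 // => i _; rewrite b_all.
by rewrite (bigD1 i) //= bi mul0r.
Qed.

Lemma card_eq1_indicator (I : finType) (t : pred I) :
  (#|t| == 1)%N%:R = \sum_j \prod_i (t i == (i == j))%:R :> R.
Proof.
under eq_bigr do rewrite prodr_indicator.
have [/card1P [x tx]|card_neq1] := boolP (#|t| == 1)%N.
  have {}tx i : t i = (i == x) by exact: tx.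
  rewrite (bigD1 x) //= big1 ?addr0 => [|j jx].
    by case: forallP => // -[] i; rewrite tx.
  case: forallP => // /(_ j); rewrite tx eqxx.
  by rewrite eq_sym (negbTE jx).
rewrite big1 // => j _; case: forallP => // tj.
by case/negP: card_neq1; apply/card1P; exists j => i; apply/eqP/tj.
Qed.

End Indicators.

Lemma big_ffun2_prod (R : comNzRingType) (I : finType) (F : I -> bool -> bool -> R) :
  \sum_(y : {ffun I -> bool}) \sum_(f : {ffun I -> bool}) \prod_i F i (y i) (f i)
  = \prod_i \sum_b \sum_c F i b c.
Proof.
rewrite (bigA_distr_bigA (fun i b => \sum_c F i b c)); apply: eq_bigr => y _.
by rewrite (bigA_distr_bigA (fun i c => F i (y i) c)).
Qed.

Definition noisy_rate {R : realFieldType} (p nu : R) : R := p * (1 - nu) + (1 - p) * nu.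

Definition prob_one_success {R : realFieldType} (m : nat) (a : R) : R :=
  m%:R * a * (1 - a) ^+ m.-1.

Section Sampling.
Context {R : realFieldType} {m : nat} (rho q nu : R).

Definition noisy_count (y f : {ffun 'I_m -> bool}) : nat := #|[pred i | y i (+) f i]|.

Definition Esample (y0 : bool) (X : {ffun 'I_m -> bool} -> {ffun 'I_m -> bool} -> R) : R :=
  \sum_y \sum_f sample_weight rho q nu y0 y f * X y f.

Lemma Esample_prod y0 (g : 'I_m -> bool -> R) :
  let a := noisy_rate (if y0 then rho else q) nu in
  Esample y0 (fun y f => \prod_i g i (y i (+) f i)) =
  \prod_i (a * g i true + (1 - a) * g i false).
Proof.
move=> a; rewrite /Esample.
transitivity (\prod_i \sum_b \sum_c
               (bprob (if y0 then rho else q) b * bprob nu c * g i (b (+) c))).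
  rewrite -big_ffun2_prod; apply: eq_bigr => y _; apply: eq_bigr => f _.
  by rewrite /sample_weight -big_split.
by apply: eq_bigr => i _; rewrite !big_bool /bprob /a /noisy_rate /=; ring.
Qed.

Lemma Esample_sum y0 (I : finType)
    (X : I -> {ffun 'I_m -> bool} -> {ffun 'I_m -> bool} -> R) :
  Esample y0 (fun y f => \sum_j X j y f) = \sum_j Esample y0 (X j).
Proof.
rewrite /Esample; under eq_bigr => y _ do under eq_bigr => f _ do rewrite mulr_sumr.
by under eq_bigr do rewrite exchange_big; rewrite exchange_big.
Qed.

Lemma EsampleB y0 X Y :
  Esample y0 X - Esample y0 Y = Esample y0 (fun y f => X y f - Y y f).
Proof.
rewrite /Esample -sumrB; apply: eq_bigr => y _.
by rewrite -sumrB; apply: eq_bigr => f _; rewrite mulrBr.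
Qed.

Lemma Esample1 y0 : Esample y0 (fun _ _ => 1) = 1.
Proof.
transitivity (Esample y0 (fun _ _ => \prod_(i < m) 1)).
  by apply: eq_bigr => y _; apply: eq_bigr => f _; rewrite big1.
by rewrite (Esample_prod y0 (fun _ _ => 1)) big1 // => i _; ring.
Qed.

Lemma Esample_affine y0 (a b : R) X Y : (forall y f, X y f = a + b * Y y f) ->
  Esample y0 X = a + b * Esample y0 Y.
Proof.
move=> XE; rewrite -[in RHS](mulr1 a) -(Esample1 y0) /Esample !mulr_sumr -big_split.
apply: eq_bigr => y _; rewrite !mulr_sumr -big_split; apply: eq_bigr => f _.
by rewrite XE /=; ring.
Qed.

Lemma Esample_noisy_count_eq1 y0 :
  Esample y0 (fun y f => (noisy_count y f == 1)%N%:R) =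
  prob_one_success m (noisy_rate (if y0 then rho else q) nu).
Proof.
set a := noisy_rate _ nu.
transitivity (Esample y0 (fun y f => \sum_j \prod_i ((y i (+) f i) == (i == j))%:R)).
  by apply: eq_bigr => y _; apply: eq_bigr => f _; rewrite card_eq1_indicator.
rewrite Esample_sum (eq_bigr (fun _ => a * (1 - a) ^+ m.-1)) => [|j _].
  by rewrite sumr_const card_ord /prob_one_success -mulrA mulr_natl.
rewrite (Esample_prod y0 (fun i b => (b == (i == j))%:R)) -/a (bigD1 j) //= eqxx.
rewrite (eq_bigr (fun _ => 1 - a)) => [|i /negbTE ->]; last by rewrite /=; ring.
by rewrite prodr_const cardC1 card_ord /=; congr (_ * _); ring.
Qed.

End Sampling.

Arguments Esample_affine {R m rho q nu y0 a b X Y}.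

Section Unlabeled.
Variables (R : realFieldType) (delta : R).

Lemma sbar_unlabeled (b : bool) : sbar delta false b = b%:R.
Proof. by rewrite /sbar; case: b; rewrite /= ?maxEle ?minEle ?ler01 ?lexx mulr0 addr0. Qed.

Lemma rbar_unlabeled k m (y f : {ffun 'I_m -> bool}) : (0 < k)%N ->
  rbar delta k false y f = (k <= noisy_count y f)%N%:R.
Proof.
move=> k_gt0; rewrite /rbar (eq_map (fun i => sbar_unlabeled (y i (+) f i))).
rewrite (map_comp (fun b : bool => b%:R)) kth_largest_indicators //.
by rewrite /noisy_count count_map enumT -size_filter cardE /enum_mem.
Qed.

Variables (m : nat) (rho q nu : R).

Lemma PrW_unlabeled k : PrW m rho q nu 1 0 0 0 delta k =
  Esample rho q nu true (fun yp fp : {ffun 'I_m -> bool} =>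
    Esample rho q nu false (fun yn fn : {ffun 'I_m -> bool} =>
    win (rbar delta k false yp fp) (rbar delta k false yn fn))).
Proof.
rewrite /PrW !big_bool /pi4 /= !mul0r !add0r mul1r.
apply: eq_bigr => yp _; apply: eq_bigr => fp _; rewrite mulr_sumr.
apply: eq_bigr => yn _; rewrite mulr_sumr.
by apply: eq_bigr => fn _; rewrite mulrA.
Qed.

Lemma PrW_unlabeled_diff :
  PrW m rho q nu 1 0 0 0 delta 2 - PrW m rho q nu 1 0 0 0 delta 1 =
  (prob_one_success m (noisy_rate q nu) - prob_one_success m (noisy_rate rho nu)) / 2.
Proof.
set one := fun y f : {ffun 'I_m -> bool} => (noisy_count y f == 1)%N%:R : R.
have Eone y0 := Esample_noisy_count_eq1 (m := m) rho q nu y0; rewrite -/one /= in Eone.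
rewrite !PrW_unlabeled EsampleB -(Eone true) -(Eone false).
rewrite (Esample_affine (a := Esample rho q nu false one / 2) (b := - 2^-1) (Y := one)).
  by ring.
move=> yp fp; rewrite EsampleB (Esample_affine (a := - one yp fp / 2) (b := 2^-1) (Y := one)).
  by ring.
move=> yn fn; rewrite !rbar_unlabeled // !win_indicators /one.
by case: (noisy_count yp fp) => [|[|?]]; case: (noisy_count yn fn) => [|[|?]];
  rewrite /=; field.
Qed.

Lemma PrW_unlabeled_lt12 :
  (PrW m rho q nu 1 0 0 0 delta 1 < PrW m rho q nu 1 0 0 0 delta 2) =
  (prob_one_success m (noisy_rate rho nu) < prob_one_success m (noisy_rate q nu)).
Proof. by rewrite -subr_gt0 PrW_unlabeled_diff pmulr_lgt0 ?invr_gt0 ?ltr0n // subr_gt0. Qed.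

Lemma PrW_unlabeled_lt21 :
  (PrW m rho q nu 1 0 0 0 delta 2 < PrW m rho q nu 1 0 0 0 delta 1) =
  (prob_one_success m (noisy_rate q nu) < prob_one_success m (noisy_rate rho nu)).
Proof. by rewrite -subr_lt0 PrW_unlabeled_diff pmulr_llt0 ?invr_gt0 ?ltr0n // subr_lt0. Qed.

End Unlabeled.

Lemma ltn_mul_expD a b x y n k : (0 < x <= y)%N ->
  (a * x ^ n < b * y ^ n)%N -> (a * x ^ (n + k) < b * y ^ (n + k))%N.
Proof.
move=> /andP[x_gt0 le_xy]; elim: k => [|k IH]; rewrite ?addn0 // addnS !expnS => lt_n.
have := IH lt_n; move: (x ^ (n + k))%N (y ^ (n + k))%N => X Y; nia.
Qed.

Lemma prob_one_success_frac {R : realFieldType} n (x x' d : nat) :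
  (0 < d)%N -> (x + x' = d)%N ->
  prob_one_success n.+1 (x%:R / d%:R : R) = n.+1%:R * (x * x' ^ n)%N%:R / (d ^ n.+1)%N%:R.
Proof.
move=> d_gt0 xd; subst d; have d_neq0 : ((x + x')%N%:R : R) != 0 by rewrite pnatr_eq0 -lt0n.
rewrite /prob_one_success /= natrM !natrX exprS.
have -> : 1 - x%:R / (x + x')%N%:R = x'%:R / (x + x')%N%:R :> R.
  by rewrite natrD in d_neq0 *; field.
by rewrite expr_div_n; field; rewrite expf_neq0 // -natrD.
Qed.

Lemma ltr_prob_one_success_frac {R : realFieldType} n (x x' u u' d : nat) :
  (0 < d)%N -> (x + x' = d)%N -> (u + u' = d)%N ->
  (prob_one_success n.+1 (x%:R / d%:R : R) < prob_one_success n.+1 (u%:R / d%:R))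
  = (x * x' ^ n < u * u' ^ n)%N.
Proof.
move=> d_gt0 xd ud.
rewrite (prob_one_success_frac _ _ _ _ d_gt0 xd) (prob_one_success_frac _ _ _ _ d_gt0 ud).
by rewrite -!mulrA ltr_pM2l ?ltr0n // ltr_pM2r ?invr_gt0 ?ltr0n ?expn_gt0 ?d_gt0 // ltr_nat.
Qed.

Lemma PrW_unlabeled_rational {R : realFieldType} (delta rho q nu : R) n (x x' u u' d : nat) :
  (0 < d)%N -> (x + x' = d)%N -> (u + u' = d)%N ->
  noisy_rate rho nu = x%:R / d%:R -> noisy_rate q nu = u%:R / d%:R ->
  (PrW n.+1 rho q nu 1 0 0 0 delta 1 < PrW n.+1 rho q nu 1 0 0 0 delta 2)
     = (x * x' ^ n < u * u' ^ n)%N /\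
  (PrW n.+1 rho q nu 1 0 0 0 delta 2 < PrW n.+1 rho q nu 1 0 0 0 delta 1)
     = (u * u' ^ n < x * x' ^ n)%N.
Proof.
move=> d_gt0 xd ud rho_rate q_rate.
rewrite PrW_unlabeled_lt12 PrW_unlabeled_lt21 rho_rate q_rate.
by rewrite (ltr_prob_one_success_frac _ _ _ _ _ _ d_gt0 xd ud)
           (ltr_prob_one_success_frac _ _ _ _ _ _ d_gt0 ud xd).
Qed.

Lemma ltn_exp4_exp7 n : (4 * 4 ^ n < 1 * 7 ^ n)%N = (3 <= n)%N.
Proof.
apply/idP/idP => [|le3n]; first by case: n => [|[|[|n]]].
by rewrite -(subnKC le3n); apply: ltn_mul_expD.
Qed.

Lemma ltn_exp8_exp11 n : (8 * 8 ^ n < 5 * 11 ^ n)%N = (2 <= n)%N.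
Proof.
apply/idP/idP => [|le2n]; first by case: n => [|[|n]].
by rewrite -(subnKC le2n); apply: ltn_mul_expD.
Qed.

Lemma is_min_threshold_of_iff (P : nat -> Prop) m0 : (2 < m0)%N ->
  (forall m, (2 <= m)%N -> P m <-> (m0 <= m)%N) -> is_min_threshold P m0.
Proof.
move=> m0_gt2 PE; split=> [m le2m|m1 P_from_m1]; first exact: (PE m le2m).2.
rewrite leqNgt; apply/negP => lt_m1_m0.
have : (m0 <= m0.-1)%N by apply/(PE _ _).1; [lia | apply: P_from_m1; lia].
lia.
Qed.

Theorem theorem2 (R : realFieldType) (delta : R) (hdelta : 0 < delta) :
  exists (rho q p00 p01 p10 p11 nu1 nu2 : R),
    [/\ 0 < q, q < rho & rho < 1] /\
        [/\ 0 <= p00, 0 <= p01, 0 <= p10, 0 <= p11 & p00 + p01 + p10 + p11 = 1] /\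
        p10 < 1 /\
        [/\ 0 <= nu1, nu1 < 2^-1, 0 <= nu2, nu2 < 2^-1 & nu1 != nu2] /\
        (forall nu, nu = nu1 \/ nu = nu2 ->
           exists m : nat, (2 <= m)%N /\
             PrW m rho q nu p00 p01 p10 p11 delta 2
               < PrW m rho q nu p00 p01 p10 p11 delta 1) /\
        (exists m01 m02 : nat, m01 <> m02 /\
           is_min_threshold (fun m => PrW m rho q nu1 p00 p01 p10 p11 delta 1
                                      < PrW m rho q nu1 p00 p01 p10 p11 delta 2) m01 /\
           is_min_threshold (fun m => PrW m rho q nu2 p00 p01 p10 p11 delta 1
                                      < PrW m rho q nu2 p00 p01 p10 p11 delta 2) m02).
Proof.
exists (2^-1), (8^-1), 1, 0, 0, 0, 0, (4^-1).
have [rate_nu1_rho rate_nu1_q rate_nu2_rho rate_nu2_q] :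
    [/\ noisy_rate (2^-1 : R) 0 = 4%:R / 8%:R, noisy_rate (8^-1 : R) 0 = 1%:R / 8%:R,
        noisy_rate (2^-1 : R) (4^-1) = 8%:R / 16%:R
      & noisy_rate (8^-1 : R) (4^-1) = 5%:R / 16%:R].
  by split; rewrite /noisy_rate; field.
have cmp_nu1 n := PrW_unlabeled_rational delta _ _ _ n 4 4 1 7 8
  isT erefl erefl rate_nu1_rho rate_nu1_q.
have cmp_nu2 n := PrW_unlabeled_rational delta _ _ _ n 8 8 5 11 16
  isT erefl erefl rate_nu2_rho rate_nu2_q.
split; first by split; lra.
split; first by split; rewrite ?lexx ?ler01 // !addr0.
split; first exact: ltr01.
split; first by split; lra.
split.
  by move=> nu [->|->]; exists 2%N; rewrite ?(cmp_nu1 1%N).2 ?(cmp_nu2 1%N).2.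
exists 4%N, 3%N; split=> //; split; apply: is_min_threshold_of_iff => // -[|n] // _.
  by rewrite (cmp_nu1 n).1 ltn_exp4_exp7.
by rewrite (cmp_nu2 n).1 ltn_exp8_exp11.
Qed.
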